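(* Let ${\bm{x}}_i^m\in\mathbb{R}^d$ ($m\in[M]$, $i\in[n]$) satisfy $\|{\bm{x}}_i^m\|\le1$ and be linearly separable. Let $\ell(z)=\log(1+e^{-z})$, $F_m({\bm{w}})=\frac1n\sum_i\ell(\langle{\bm{w}},{\bm{x}}_i^m\rangle)$, $F=\frac1M\sum_mF_m$. Run Local GD with any ${\bm{w}}_0$, $\eta>0$, $K\in\mathbb{N}$: ${\bm{w}}_{r,0}^m={\bm{w}}_r$, ${\bm{w}}_{r,k+1}^m={\bm{w}}_{r,k}^m-\eta\nabla F_m({\bm{w}}_{r,k}^m)$ ($k=0,\dots,K-1$), ${\bm{w}}_{r+1}=\frac1M\sum_m{\bm{w}}_{r,K}^m$. If $F({\bm{w}}_r)\le1/(4\eta M)$ for some $r\ge0$, then for every $m\in[M]$, $F_m({\bm{w}}_{r,k}^m)$ is (non-increasing) decreasing in $k\in\{0,\dots,K\}$.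
   Context: Linear separability means there is ${\bm{w}}$ with $\langle{\bm{w}},{\bm{x}}_i^m\rangle>0$ for all $m,i$ (labels absorbed into data). *)

From HB Require Import structures.
From mathcomp Require Import all_boot all_order all_algebra.
From mathcomp Require Import boolp classical_sets reals ereal topology normedtype sequences exp.
Set Implicit Arguments. Unset Strict Implicit. Unset Printing Implicit Defensive.
Import Order.TTheory GRing.Theory Num.Theory.
Local Open Scope ring_scope.

Section LocalGD.
Variable R : realType.

Definition inner (d : nat) (u v : 'rV[R]_d) : R := \sum_(j < d) u 0 j * v 0 j.
Definition vnorm (d : nat) (u : 'rV[R]_d) : R := Num.sqrt (inner u u).

Definition logistic (z : R) : R := ln (1 + expR (- z)).
Definition logistic' (z : R) : R := - (1 + expR z)^-1.

Variables (d M n : nat) (x : 'I_M -> 'I_n -> 'rV[R]_d).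

Definition Floc (m : 'I_M) (w : 'rV[R]_d) : R :=
  n%:R^-1 * \sum_(i < n) logistic (inner w (x m i)).
Definition Fglob (w : 'rV[R]_d) : R := M%:R^-1 * \sum_(m < M) Floc m w.
Definition gradFloc (m : 'I_M) (w : 'rV[R]_d) : 'rV[R]_d :=
  n%:R^-1 *: \sum_(i < n) (logistic' (inner w (x m i)) *: x m i).

Variables (eta : R) (K : nat).

Definition local_iter (v : 'rV[R]_d) (m : 'I_M) (k : nat) : 'rV[R]_d :=
  iter k (fun u => u - eta *: gradFloc m u) v.

Fixpoint global_iter (w0 : 'rV[R]_d) (r : nat) : 'rV[R]_d :=
  match r with
  | 0 => w0
  | r'.+1 => M%:R^-1 *: \sum_(m < M) local_iter (global_iter w0 r') m K
  end.

End LocalGD.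

Definition linearly_separable (R : realType) (d M n : nat)
  (x : 'I_M -> 'I_n -> 'rV[R]_d) : Prop :=
  exists w : 'rV[R]_d, forall m i, 0 < inner w (x m i).

From HB Require Import structures.
From mathcomp Require Import all_boot all_order all_algebra.
From mathcomp Require Import boolp classical_sets reals ereal topology normedtype sequences exp.
From mathcomp Require Import ring lra.
Import Order.TTheory GRing.Theory Num.Theory.
Local Open Scope ring_scope.

(* Fix a client m, a point w and g := grad F_m(w), and write p_i := -l'(<w, x_i>) > 0.
   As |x_i| <= 1 and p <= l, every coordinate step s_i := eta <g, x_i> is at most
   eta (1/n) sum_j p_j <= eta F_m(w), hence at most 1/4 when F_m(w) <= 1/(4 eta),
   and s_i^2 <= eta^2 |g|^2.  For s <= 1/4 the logistic loss satisfies
   l(z - s) <= l(z) + p(z) (s + 4/3 s^2), and averaging over i, using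
   |g|^2 = -(1/n) sum_i p_i <g, x_i>, gives
     F_m(w - eta g) <= F_m(w) - eta |g|^2 + 4/3 eta^2 |g|^2 (1/n) sum_i p_i
                    <= F_m(w) - 2/3 eta |g|^2.
   So a local step started in the sublevel set {F_m <= 1/(4 eta)} decreases F_m and
   stays there; the round starts in it because F_m(w_r) <= M F(w_r) <= 1/(4 eta). *)

Section Logistic.
Context {R : realType}.
Implicit Types z s : R.

Lemma logistic_ge0 z : 0 <= logistic z.
Proof. by apply: ln_ge0; rewrite lerDl expR_ge0. Qed.

Lemma logistic'_lt0 z : logistic' z < 0.
Proof. by rewrite oppr_lt0 invr_gt0 addr_gt0 ?expR_gt0. Qed.

Lemma opp_logistic'_le_logistic z : - logistic' z <= logistic z.
Proof.
rewrite /logistic /logistic' opprK.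
set y := expR (- z); have hy : 0 < y by apply: expR_gt0.
have hq : (1 + expR z)^-1 = y / (1 + y).
  rewrite /y expRN; field.
  by have := expR_gt0 z => hz; apply/andP; split; rewrite gt_eqF //; lra.
have hq1 : y / (1 + y) < 1 by rewrite ltr_pdivrMr ?mul1r; lra.
have := @le_ln1Dx R (- (y / (1 + y))) ltac:(lra).
have -> : 1 - y / (1 + y) = (1 + y)^-1 by field; lra.
by rewrite lnV ?posrE ?hq; lra.
Qed.

Lemma logistic_subr_le z s :
  logistic (z - s) <= logistic z - logistic' z * (expR s - 1).
Proof.
rewrite /logistic /logistic' mulNr opprK.
set p := (1 + expR z)^-1.
have hp : 0 < p by rewrite invr_gt0 addr_gt0 ?expR_gt0.
have hp1 : p < 1 by rewrite invf_lt1 ?addr_gt0 ?ltrDl ?expR_gt0.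
have hps : 0 < p * expR s by rewrite mulr_gt0 ?expR_gt0.
have hsplit : 1 + expR (- (z - s)) = (1 + expR (- z)) * (1 + p * (expR s - 1)).
  rewrite opprB expRB expRN /p; field.
  by have := expR_gt0 z => hz; apply/andP; split; rewrite gt_eqF //; lra.
rewrite hsplit lnM ?posrE; last 2 first.
- by rewrite addr_gt0 ?expR_gt0.
- by rewrite mulrBr mulr1; lra.
by rewrite lerD2l; apply: le_ln1Dx; rewrite mulrBr mulr1; lra.
Qed.

Lemma expR_sub1_le s : s <= 1/4 -> expR s - 1 <= s + 4/3 * s ^+ 2.
Proof.
move=> hs; have hs1 : 0 < 1 - s by lra.
have hexp : expR s <= (1 - s)^-1.
  have := expR_ge1Dx (- s); rewrite expRN => h.
  by rewrite -(invrK (expR s)) lef_pV2 ?posrE ?invr_gt0 ?expR_gt0.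
suff : (1 - s)^-1 - 1 <= s + 4/3 * s ^+ 2 by lra.
rewrite -subr_ge0.
have -> : s + 4/3 * s ^+ 2 - ((1 - s)^-1 - 1) = s ^+ 2 * (1 - 4 * s) / (3 * (1 - s)).
  by field; lra.
by apply: divr_ge0; [apply: mulr_ge0; [exact: sqr_ge0 | lra] | lra].
Qed.

Lemma logistic_subr_le_quadratic z s c : s <= 1/4 -> s ^+ 2 <= c ->
  logistic (z - s) <= logistic z - logistic' z * (s + 4/3 * c).
Proof.
move=> hs hc; apply: le_trans (logistic_subr_le z s) _.
rewrite lerD2l -!mulNr; apply: ler_wpM2l; first by rewrite oppr_ge0 ltW ?logistic'_lt0.
by apply: le_trans (expR_sub1_le _ hs) _; rewrite lerD2l ler_pM2l.
Qed.

End Logistic.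

Section Inner.
Context {R : realType} {d : nat}.
Implicit Types u v w : 'rV[R]_d.

Lemma innerC u v : inner u v = inner v u.
Proof. by apply: eq_bigr => j _; rewrite mulrC. Qed.

Lemma innerDl u v w : inner (u + v) w = inner u w + inner v w.
Proof. by rewrite /inner -big_split; apply: eq_bigr => j _; rewrite mxE mulrDl. Qed.

Lemma innerZl c u w : inner (c *: u) w = c * inner u w.
Proof. by rewrite /inner mulr_sumr; apply: eq_bigr => j _; rewrite mxE mulrA. Qed.

Lemma innerBl u v w : inner (u - v) w = inner u w - inner v w.
Proof. by rewrite innerDl -scaleN1r innerZl mulN1r. Qed.

Lemma inner_suml (k : nat) (f : 'I_k -> 'rV[R]_d) w :
  inner (\sum_(i < k) f i) w = \sum_(i < k) inner (f i) w.
Proof.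
rewrite /inner exchange_big; apply: eq_bigr => j _.
by rewrite summxE mulr_suml.
Qed.

Lemma inner_self_ge0 u : 0 <= inner u u.
Proof. by apply: sumr_ge0 => j _; rewrite -expr2 sqr_ge0. Qed.

Lemma inner_self_le1 u : vnorm u <= 1 -> inner u u <= 1.
Proof. by move=> hu; rewrite -(@ler_sqrt _ _ 1) ?sqrtr1 ?inner_self_ge0. Qed.

Lemma inner_geN1 {u v} : inner u u <= 1 -> inner v v <= 1 -> -1 <= inner u v.
Proof.
move=> hu hv; have := inner_self_ge0 (u + v).
by rewrite !innerDl (innerC u) (innerC v) !innerDl (innerC v u); lra.
Qed.

Lemma sqr_inner_le g u : inner u u <= 1 -> inner g u ^+ 2 <= inner g g.
Proof.
move=> hu; have := inner_self_ge0 (g - inner g u *: u).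
rewrite innerBl innerZl ![inner _ (g - _)]innerC !innerBl !innerZl (innerC u g).
by have := inner_self_ge0 u; nra.
Qed.

End Inner.

Section Losses.
Context {R : realType} {d M n : nat} {x : 'I_M -> 'I_n -> 'rV[R]_d}.
Implicit Types (m : 'I_M) (u v w : 'rV[R]_d).

Lemma Floc_ge0 m w : 0 <= Floc x m w.
Proof.
by rewrite mulr_ge0 ?invr_ge0 ?ler0n ?sumr_ge0 // => i _; apply: logistic_ge0.
Qed.

Lemma Floc_le_Fglob m w : (0 < M)%N -> Floc x m w <= M%:R * Fglob x w.
Proof.
move=> hM; rewrite /Fglob mulrA mulfV ?mul1r ?pnatr_eq0 -?lt0n // (bigD1 m) //=.
by rewrite lerDl sumr_ge0 // => m' _; apply: Floc_ge0.
Qed.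

Lemma inner_gradFloc m w u : inner (gradFloc x m w) u =
  n%:R^-1 * \sum_(i < n) logistic' (inner w (x m i)) * inner (x m i) u.
Proof.
rewrite innerZl inner_suml; congr (_ * _).
by apply: eq_bigr => i _; rewrite innerZl.
Qed.

Lemma opp_mean_logistic'_le_Floc m w :
  - (n%:R^-1 * \sum_(i < n) logistic' (inner w (x m i))) <= Floc x m w.
Proof.
rewrite -mulrN -sumrN ler_wpM2l ?invr_ge0 ?ler0n //.
by apply: ler_sum => i _; apply: opp_logistic'_le_logistic.
Qed.

Section LocalStep.
Context {m : 'I_M}.
Hypothesis hx : forall i, inner (x m i) (x m i) <= 1.

Lemma inner_gradFloc_le_Floc w i : inner (gradFloc x m w) (x m i) <= Floc x m w.
Proof.
apply: le_trans (opp_mean_logistic'_le_Floc m w).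
rewrite inner_gradFloc -mulrN -sumrN ler_wpM2l ?invr_ge0 ?ler0n //.
apply: ler_sum => j _.
have := logistic'_lt0 (inner w (x m j)); have := inner_geN1 (hx j) (hx i).
by nra.
Qed.

Context {eta : R}.
Hypothesis heta : 0 < eta.

Lemma Floc_gd_step_descent w : Floc x m w <= (4 * eta)^-1 ->
  Floc x m (w - eta *: gradFloc x m w)
    <= Floc x m w - 2/3 * eta * inner (gradFloc x m w) (gradFloc x m w).
Proof.
move=> hF; set g := gradFloc x m w; set G := inner g g.
pose z i := inner w (x m i); pose a i := inner g (x m i).
pose P := - (n%:R^-1 * \sum_(i < n) logistic' (z i)).
have hG : G = n%:R^-1 * \sum_(i < n) logistic' (z i) * a i.
  by rewrite {1}/G inner_gradFloc; congr (_ * _); apply: eq_bigr => i _; rewrite (innerC (x m i)).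
have hG0 : 0 <= G by apply: inner_self_ge0.
have hPF : P <= Floc x m w by apply: opp_mean_logistic'_le_Floc.
have hetaF : eta * Floc x m w <= 1/4.
  have -> : 1/4 = eta * (4 * eta)^-1 by field; rewrite gt_eqF.
  by rewrite ler_pM2l.
have hsample i : logistic (z i - eta * a i)
    <= logistic (z i) - logistic' (z i) * (eta * a i + 4/3 * eta ^+ 2 * G).
  rewrite -[4/3 * _ * G]mulrA; apply: logistic_subr_le_quadratic.
    by apply: le_trans hetaF; rewrite ler_pM2l ?inner_gradFloc_le_Floc.
  by rewrite exprMn ler_pM2l ?exprn_gt0 ?sqr_inner_le.
rewrite {1}/Floc; under eq_bigr => i _ do rewrite innerBl innerZl.
apply: le_trans (ler_wpM2l _ (ler_sum _ (fun i _ => hsample i))) _.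
  by rewrite invr_ge0 ler0n.
have -> : n%:R^-1 * \sum_(i < n)
      (logistic (z i) - logistic' (z i) * (eta * a i + 4/3 * eta ^+ 2 * G))
    = Floc x m w - eta * G + 4/3 * eta ^+ 2 * G * P.
  under eq_bigr => i _ do rewrite mulrDr mulrCA [logistic' _ * (_ * G)]mulrC.
  by rewrite sumrB big_split /= -!mulr_sumr hG /P /Floc; ring.
have hGP : eta ^+ 2 * G * P <= eta * G / 4.
  have hEG : 0 <= eta * G by apply: mulr_ge0; [exact: ltW | ].
  have hEP : eta * P <= 1/4 by apply: le_trans hetaF; rewrite ler_pM2l.
  by nra.
lra.
Qed.

Lemma Floc_gd_step_le w : Floc x m w <= (4 * eta)^-1 ->
  Floc x m (w - eta *: gradFloc x m w) <= Floc x m w.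
Proof.
move=> hF; apply: le_trans (Floc_gd_step_descent w hF) _.
by rewrite gerBl !mulr_ge0 ?inner_self_ge0 ?ltW.
Qed.

Lemma Floc_local_iter_nonincreasing v : Floc x m v <= (4 * eta)^-1 ->
  forall k, Floc x m (local_iter x eta v m k.+1) <= Floc x m (local_iter x eta v m k).
Proof.
move=> hv.
have hbound k : Floc x m (local_iter x eta v m k) <= Floc x m v.
  by elim: k => [|k IH] //; apply: le_trans (Floc_gd_step_le _ (le_trans IH hv)) IH.
by move=> k; apply: Floc_gd_step_le; apply: le_trans (hbound k) hv.
Qed.

End LocalStep.
End Losses.

Theorem lemma4p6 (R : realType) (d M n : nat) (x : 'I_M -> 'I_n -> 'rV[R]_d)
  (hM : (0 < M)%N) (hn : (0 < n)%N)
  (hnorm : forall m i, vnorm (x m i) <= 1)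
  (hsep : linearly_separable x)
  (w0 : 'rV[R]_d) (eta : R) (heta : 0 < eta) (K r : nat)
  (hF : Fglob x (global_iter x eta K w0 r) <= (4 * eta * M%:R)^-1) :
  forall (m : 'I_M) (k : nat), (k < K)%N ->
    Floc x m (local_iter x eta (global_iter x eta K w0 r) m k.+1)
      <= Floc x m (local_iter x eta (global_iter x eta K w0 r) m k).
Proof.
move=> m k _; set v := global_iter x eta K w0 r.
have hx i : inner (x m i) (x m i) <= 1 by apply: inner_self_le1.
have hv : Floc x m v <= (4 * eta)^-1.
  apply: le_trans (Floc_le_Fglob m v hM) _.
  have hM0 : (0 : R) < M%:R by rewrite ltr0n.
  have -> : (4 * eta)^-1 = M%:R * (4 * eta * M%:R)^-1 by field; rewrite !gt_eqF.
  by rewrite ler_pM2l.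
exact: (Floc_local_iter_nonincreasing hx heta v hv k).
Qed.
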